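(* For any oriented graph $G$, $\chi^*_o(G) \geq \frac{|V(G)|}{\alpha_o(G)}$.
   Context: An oriented graph is a finite directed graph with no directed cycle of length 1 or 2. For a set $S$ of $k$ colors, a $b$-fold oriented $k$-coloring of $G$ is a map $f$ from $V(G)$ to the $b$-element subsets of $S$ such that (i) $f(x)\cap f(y)=\emptyset$ for every arc $xy$, and (ii) for all arcs $xy, zw$, $f(x)\cap f(w)\neq\emptyset$ implies $f(y)\cap f(z)=\emptyset$. $\chi^b_o(G)$ is the minimum such $k$, and $\chi^*_o(G)=\lim_{b\to\infty}\chi^b_o(G)/b=\inf_{b\ge1}\chi^b_o(G)/b$. An oriented coloring is a $1$-fold oriented coloring (viewed as a map to colors). A set $I\subseteq V(G)$ is an oriented independent set if for every two distinct $x,y\in I$ there is an oriented coloring $f$ of $G$ with $f(x)=f(y)$. The oriented independence number $\alpha_o(G)$ is the maximum size of an oriented independent set. *)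

From HB Require Import structures.
From mathcomp Require Import all_boot all_order all_algebra.
From mathcomp Require Import boolp classical_sets reals.
Set Implicit Arguments. Unset Strict Implicit. Unset Printing Implicit Defensive.
Import Order.TTheory GRing.Theory Num.Theory.

Definition oriented (V : finType) (arc : rel V) : Prop :=
  (forall x, ~~ arc x x) /\ (forall x y, arc x y -> ~~ arc y x).

Definition bfold_oriented_coloring (V : finType) (arc : rel V) (b k : nat)
    (f : V -> {set 'I_k}) : Prop :=
  [/\ (forall x, #|f x| = b),
      (forall x y, arc x y -> f x :&: f y = finset.set0) &
      (forall x y z w, arc x y -> arc z w ->
         f x :&: f w != finset.set0 -> f y :&: f z = finset.set0)].

Definition has_bfold_coloring (V : finType) (arc : rel V) (b k : nat) : bool :=
  `[< exists f : V -> {set 'I_k}, bfold_oriented_coloring arc b f >].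

(* chi^b_o(G): least k admitting a b-fold oriented k-coloring
   (such a k always exists; the fallback 0 is never used). *)
Definition chi_b (V : finType) (arc : rel V) (b : nat) : nat :=
  match pselect (exists k, has_bfold_coloring arc b k) with
  | left ex => ex_minn ex
  | right _ => 0
  end.

Definition chi_star (R : realType) (V : finType) (arc : rel V) : R :=
  inf [set ((chi_b arc b)%:R / b%:R : R)%R | b in [set b : nat | (0 < b)%N]].

(* Oriented coloring (1-fold), colors taken in nat (any finite color set
   can be relabelled injectively into nat). *)
Definition oriented_coloring (V : finType) (arc : rel V) (c : V -> nat) : Prop :=
  (forall x y, arc x y -> c x <> c y) /\
  (forall x y z w, arc x y -> arc z w -> c x = c w -> c y <> c z).

Definition oriented_independent (V : finType) (arc : rel V) (I : {set V}) : Prop :=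
  forall x y, x \in I -> y \in I -> x <> y ->
    exists c, oriented_coloring arc c /\ c x = c y.

Definition alpha_o (V : finType) (arc : rel V) : nat :=
  \max_(I : {set V} | `[< oriented_independent arc I >]) #|I|.

From HB Require Import structures.
From mathcomp Require Import all_boot all_order all_algebra.
From mathcomp Require Import boolp classical_sets reals.
Set Implicit Arguments. Unset Strict Implicit. Unset Printing Implicit Defensive.
Import Order.TTheory GRing.Theory Num.Theory.
Local Open Scope ring_scope.

(* Each color class of a b-fold oriented k-coloring f is an oriented
   independent set: give the whole class one color and every other vertex a
   private color. Two vertices then share a color only when their color sets
   meet (for a vertex with itself this uses b > 0), so the two conditions on
   f carry over to the new coloring. Double counting the pairs
   (vertex, color) gives |V| b <= k alpha_o, i.e. chi^b_o / b >= |V| / alpha_o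
   for every b >= 1. *)

Lemma sum_card_incidence (T I : finType) (f : T -> {set I}) :
  (\sum_(i : I) #|[set x | i \in f x]| = \sum_(x : T) #|f x|)%N.
Proof.
transitivity (\sum_(i : I) \sum_(x : T) (i \in f x : nat))%N.
  apply: eq_bigr => i _; rewrite -sum1_card big_mkcond.
  by apply: eq_bigr => x _; rewrite inE.
by rewrite exchange_big; apply: eq_bigr => x _; rewrite -sum1_card [RHS]big_mkcond.
Qed.

Section Colorings.
Variables (V : finType) (arc : rel V).

Lemma disjoint_bfold_oriented_coloring (b k : nat) (f : V -> {set 'I_k}) :
  oriented arc -> (forall x, #|f x| = b) ->
  (forall x y, x != y -> f x :&: f y = finset.set0) ->
  bfold_oriented_coloring arc b f.
Proof.
move=> [arc_irr arc_asym] card_f disj_f; split=> //.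
- move=> x y axy; apply: disj_f; apply: contraTneq axy => <-; exact: arc_irr.
- move=> x y z w axy azw meet_xw.
  have eq_xw : x = w by apply: contraNeq meet_xw => /disj_f->; rewrite eqxx.
  apply: disj_f; apply: contraTneq azw => <-; rewrite -eq_xw; exact: arc_asym.
Qed.

Lemma exists_bfold_coloring (b : nat) :
  oriented arc -> exists k, has_bfold_coloring arc b k.
Proof.
move=> arc_or; exists #|{: V * 'I_b}|; apply/asboolP.
exists (fun x => [set enum_rank (x, j) | j : 'I_b]).
apply: disjoint_bfold_oriented_coloring => // [x|x y neq_xy].
  by rewrite card_imset ?card_ord // => j j' /enum_rank_inj [].
apply/setP => i; rewrite !inE; apply/negbTE/andP.
case=> /imsetP[j _ ->] /imsetP[j' _] /enum_rank_inj[eq_xy _].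
by rewrite eq_xy eqxx in neq_xy.
Qed.

Lemma chi_b_coloring (b : nat) :
  oriented arc -> has_bfold_coloring arc b (chi_b arc b).
Proof.
move=> arc_or; rewrite /chi_b; case: pselect => [ex | []].
  by case: ex_minnP.
exact: exists_bfold_coloring.
Qed.

Section ColorClass.
Variables (b k : nat) (f : V -> {set 'I_k}).
Hypotheses (b_gt0 : (0 < b)%N) (f_col : bfold_oriented_coloring arc b f).

Lemma oriented_coloring_of_meeting (c : V -> nat) :
  (forall u w, c u = c w -> f u :&: f w != finset.set0) -> oriented_coloring arc c.
Proof.
case: f_col => _ f_arc f_swap meet_c; split.
- by move=> x y /f_arc meet0 /meet_c; rewrite meet0 eqxx.
- move=> x y z w axy azw /meet_c /(f_swap _ _ _ _ axy azw) meet0 /meet_c.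
  by rewrite meet0 eqxx.
Qed.

Lemma color_class_oriented_independent (i : 'I_k) :
  oriented_independent arc [set x | i \in f x].
Proof.
have f_neq0 x : f x != finset.set0.
  by case: f_col => card_f _ _; rewrite -card_gt0 card_f.
pose c x := if i \in f x then 0%N else (enum_rank x).+1.
move=> x y; rewrite !inE => ix iy _; exists c; split; last by rewrite /c ix iy.
apply: oriented_coloring_of_meeting => u w; rewrite /c.
case iu: (i \in f u); case iw: (i \in f w) => //; last first.
  by move=> [/ord_inj/enum_rank_inj <-]; rewrite finset.setIid.
by move=> _; apply/set0Pn; exists i; rewrite inE iu iw.
Qed.

Lemma card_mul_le_colors_alpha : (#|V| * b <= k * alpha_o arc)%N.
Proof.
case: f_col => card_f _ _.
rewrite -sum_nat_const -(eq_bigr _ (fun x _ => card_f x)) -sum_card_incidence.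
rewrite -[k in (_ <= k * _)%N]card_ord -sum_nat_const; apply: leq_sum => i _.
apply: (leq_bigmax_cond (F := fun I : {set V} => #|I|)).
by apply/asboolP; apply: color_class_oriented_independent.
Qed.

End ColorClass.
End Colorings.

Theorem theorem4 (R : realType) (V : finType) (arc : rel V) :
  oriented arc ->
  (#|V|%:R / (alpha_o arc)%:R : R) <= chi_star R arc.
Proof.
move=> arc_or; apply: lb_le_inf; first by exists ((chi_b arc 1)%:R / 1%:R); exists 1%N.
move=> _ [b /= b_gt0 <-].
have /asboolP[f f_col] := chi_b_coloring b arc_or.
have := card_mul_le_colors_alpha b_gt0 f_col.
case: (posnP (alpha_o arc)) => [-> _ | alpha_gt0 le_count].
  by rewrite invr0 mulr0 divr_ge0.
rewrite ler_pdivlMr ?ltr0n // mulrAC ler_pdivrMr ?ltr0n //.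
by rewrite -!natrM ler_nat.
Qed.
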